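(* There exists an absolute constant $\theta>0$ such that the following holds. Let $\epsilon \in (0,\exp(-2))$, let $G$ be an abelian group, and let $A \subset G$ be a non-empty finite distributional $\epsilon$-approximate group. If $240\,\epsilon \log(\epsilon^{-1}|A|) \le \theta$, then there exist a finite subgroup $H$ of $G$ and an element $x \in G$ such that \[\frac{|A \,\Delta\, (H + \{x\})|}{|H|} \le 240\, \epsilon\, \log(\epsilon^{-1}|A|).\]
   Context: $\log$ denotes the natural logarithm and $\Delta$ denotes symmetric difference of sets; $H+\{x\} = \{h+x : h \in H\}$. Definition: for $\epsilon>0$, an abelian group $G$ and a non-empty finite subset $A$ of $G$, $A$ is a distributional $\epsilon$-approximate group of $G$ if there exists a subset $U \subset G$ with $|U| = |A|$ such that the proportion of pairs $(a,b) \in A \times A$ with $a+b \in U$ is at least $1-\epsilon$. *)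

From mathcomp Require Import all_boot all_order all_algebra.
From mathcomp Require Import finmap.
From Stdlib Require Import Reals.
Set Implicit Arguments. Unset Strict Implicit. Unset Printing Implicit Defensive.
Local Open Scope fset_scope.
Local Open Scope ring_scope.

(* Abelian groups are modelled as zmodType's (additive, possibly infinite);
   finite subsets as {fset G}. *)

Definition is_subgroup (G : zmodType) (H : {fset G}) : Prop :=
  (0 \in H) /\ (forall x y, x \in H -> y \in H -> (x - y) \in H).

Definition translate (G : zmodType) (H : {fset G}) (x : G) : {fset G} :=
  [fset (h + x) | h in H].

Definition symdiff (G : zmodType) (A B : {fset G}) : {fset G} :=
  (A `\` B) `|` (B `\` A).

Definition npairs_in (G : zmodType) (A U : {fset G}) : nat :=
  #|` [fset p in A `*` A | (p.1 + p.2) \in U] |.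

Local Open Scope R_scope.
Definition distrib_approx_group (G : zmodType) (eps : R) (A : {fset G}) : Prop :=
  A != fset0 /\
  exists U : {fset G}, #|` U| = #|` A| /\
    1 - eps <= INR (npairs_in A U) / INR (#|` A| * #|` A|).

From Stdlib Require Import Reals Lra Psatz.
From mathcomp Require Import all_boot all_order all_algebra finmap zify.
Set Implicit Arguments. Unset Strict Implicit. Unset Printing Implicit Defensive.
Local Open Scope fset_scope.
Local Open Scope nat_scope.
Import GRing.Theory.

(* Write D(t) = |A \ (A + t)|.  Since |U| = |A|, D(b - a) is at most the number
   of points of A + a and of A + b outside U, and by Markov's inequality most
   a in A are good: A + a misses U in O(eps |A|) points.  Every t with
   D(t) < |A|/2 is a difference of two good points, whence the gap
   D(t) < |A|/2  ==>  D(t) <= 8 eps |A|;  by subadditivity of D the shifts with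
   small D then form a finite subgroup H.  For a good a0, A \ (H + a0) consists
   of points a with A + a far from U (Markov again), while (H + a0) \ A is
   bounded by double counting the pairs (y, t) in (A & (H + a0)) x H with
   y + t in A.  This gives |A Delta (H + x)| <= 40 eps |H| as soon as
   eps < 1/32; the logarithmic factor of the statement only forces eps <= 1/480. *)

Lemma card_fset_sep (K : choiceType) (X : {fset K}) (P : pred K) :
  #|` [fset x in X | P x]| = count P X.
Proof. by rewrite card_fset_sum1 -big_fset_condE sum1_count. Qed.

Lemma card_fsetD_triangle (K : choiceType) (X Y Z : {fset K}) :
  #|` X `\` Z| <= #|` X `\` Y| + #|` Y `\` Z|.
Proof.
apply: leq_trans (fsubset_leq_card (_ : _ `<=` (X `\` Y) `|` (Y `\` Z))) _.
  by apply/fsubsetP=> y; rewrite !inE; case: (y \in X); case: (y \in Y); case: (y \in Z).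
by rewrite cardfsU leq_subr.
Qed.

Lemma card_fsetD_sym (K : choiceType) (X Y : {fset K}) :
  #|` X| = #|` Y| -> #|` X `\` Y| = #|` Y `\` X|.
Proof. by move=> eXY; rewrite !cardfsD eXY fsetIC. Qed.

Lemma leq_mul_count_sum (T : Type) (s : seq T) (f : T -> nat) (c : nat) :
  c * count (fun x => c <= f x) s <= \sum_(x <- s) f x.
Proof.
rewrite -sum1_count big_distrr /= big_mkcond /=.
by apply: leq_sum => x _; case: ifP => //; rewrite muln1.
Qed.

Section Translates.
Variable G : zmodType.
Implicit Types (X Y : {fset G}) (x y : G).

Lemma mem_translate X x y : (y \in translate X x) = (y - x \in X)%R.
Proof.
apply/imfsetP/idP => /= [[h hX ->]|yX]; first by rewrite addrK.
by exists (y - x)%R => //; rewrite subrK.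
Qed.

Lemma card_translate X x : #|` translate X x| = #|` X|.
Proof. by rewrite card_in_imfset //= => a b _ _; apply: addIr. Qed.

Lemma translateA X x y : translate (translate X x) y = translate X (x + y)%R.
Proof. by apply/fsetP=> z; rewrite !mem_translate opprD addrA addrAC. Qed.

Lemma translate0 X : translate X 0%R = X.
Proof. by apply/fsetP=> z; rewrite mem_translate subr0. Qed.

Lemma translateD X Y x : translate X x `\` translate Y x = translate (X `\` Y) x.
Proof. by apply/fsetP=> z; rewrite !inE !mem_translate !inE. Qed.

Lemma sum_count_translate_le (T X : {fset G}) :
  \sum_(t <- T) count (fun y => (y + t)%R \in X) X <= #|` X| * #|` X|.
Proof.
have -> : \sum_(t <- T) count (fun y => (y + t)%R \in X) X =
          \sum_(y <- X) count (fun t => (y + t)%R \in X) T.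
  under eq_bigr do rewrite -sum1_count big_mkcond /=.
  by rewrite exchange_big; apply: eq_bigr => y _; rewrite -sum1_count [RHS]big_mkcond.
rewrite -[X in _ <= X * _]sum1_size big_distrl /=; apply: leq_sum => y _.
rewrite mul1n -card_fset_sep -(card_translate X (- y)%R); apply: fsubset_leq_card.
by apply/fsubsetP=> t; rewrite !inE mem_translate opprK addrC => /andP[].
Qed.

Lemma is_subgroup_add (H : {fset G}) x y :
  is_subgroup H -> x \in H -> y \in H -> (x + y)%R \in H.
Proof.
by case=> H0 Hsub xH yH; rewrite -[y]opprK -[(- y)%R]sub0r !Hsub.
Qed.
End Translates.

Definition shift_defect (G : zmodType) (A : {fset G}) (t : G) : nat :=
  #|` A `\` translate A t|.

Definition miss (G : zmodType) (A U : {fset G}) (x : G) : nat :=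
  #|` translate A x `\` U|.

Section ShiftDefect.
Variables (G : zmodType) (A : {fset G}).
Local Notation D := (shift_defect A).

Lemma shift_defect_translate (a b : G) :
  D (b - a)%R = #|` translate A a `\` translate A b|.
Proof. by rewrite /shift_defect -(card_translate _ a) -translateD translateA subrK. Qed.

Lemma shift_defect_opp (t : G) : D (- t)%R = D t.
Proof.
by rewrite -sub0r shift_defect_translate translate0 card_fsetD_sym ?card_translate.
Qed.

Lemma shift_defect_sub (t s : G) : D (t - s)%R <= D t + D s.
Proof.
rewrite shift_defect_translate; apply: leq_trans (card_fsetD_triangle _ A _) _.
by rewrite (@card_fsetD_sym _ (translate A s)) ?card_translate // addnC.
Qed.

Lemma shift_defect_le_miss (U : {fset G}) (a b : G) : #|` U| = #|` A| ->
  D (b - a)%R <= miss A U a + miss A U b.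
Proof.
move=> cardU; rewrite shift_defect_translate.
apply: leq_trans (card_fsetD_triangle _ U _) _.
by rewrite /miss (@card_fsetD_sym _ U) // card_translate.
Qed.

Lemma miss_count (U : {fset G}) (x : G) :
  miss A U x = count (fun y => (y + x)%R \notin U) A.
Proof.
rewrite /miss -card_fset_sep -[RHS](card_translate _ x); congr #|` _|.
by apply/fsetP=> y; rewrite !inE !mem_translate !inE subrK andbC.
Qed.

Lemma npairs_in_add_sum_miss (U : {fset G}) :
  npairs_in A U + \sum_(x <- A) miss A U x = #|` A| * #|` A|.
Proof.
rewrite /npairs_in card_fset_sum1 -big_fset_condE big_mkcond /fsetM big_imfset2 /=; last first.
  by move=> [a1 a2] [b1 b2] _ _ /= [-> ->].
rewrite -big_split /= -[X in X * _]sum1_size big_distrl /=; apply: eq_bigr => x _.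
rewrite mul1n miss_count -sum1_count [in X in _ + X]big_mkcond -big_split /= -sum1_size.
by apply: eq_bigr => y _; rewrite addrC; case: (_ \in U).
Qed.
End ShiftDefect.

Section ApproximateGroup.
Variables (G : zmodType) (A U : {fset G}).
Hypothesis cardU : #|` U| = #|` A|.
Local Notation n := #|` A|.
Local Notation D := (shift_defect A).
(* s stands for eps |A|^2 *)
Variable s : nat.
Hypothesis sum_miss_le : \sum_(x <- A) miss A U x <= s.
Hypothesis small_miss : 32 * s < n * n.

Lemma cardA_gt0 : 0 < n.
Proof. by move: small_miss; rewrite lt0n; apply: contraTneq => ->. Qed.

Definition good_points : {fset G} := [fset x in A | n * miss A U x <= 4 * s].

Lemma card_fsetD_good_points : 4 * #|` A `\` good_points| <= n.
Proof.
have -> : A `\` good_points = [fset x in A | (4 * s).+1 <= n * miss A U x].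
  by apply/fsetP=> x; rewrite !inE ltnNge; case: (x \in A); rewrite ?andbF ?andbT.
have := leq_mul_count_sum A (fun x => n * miss A U x) (4 * s).+1.
rewrite -big_distrr card_fset_sep => /leq_trans/(_ (leq_mul (leqnn n) sum_miss_le)).
by set k := count _ _; nia.
Qed.

Lemma good_points_pair (t : G) : 2 * D t < n ->
  exists2 z, z \in good_points & (z - t)%R \in good_points.
Proof.
move=> Dt.
case: (fset_0Vmem (A `&` translate A t `&` good_points `&` translate good_points t)).
  move=> noz; suff cover : A `&` translate A t `<=`
                           (A `\` good_points) `|` (translate A t `\` translate good_points t).
    have := fsubset_leq_card cover; rewrite cardfsU translateD card_translate.
    have := card_fsetD_good_points; have := cardfsID (translate A t) A.
    by rewrite /shift_defect in Dt; lia.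
  apply/fsubsetP=> z; rewrite in_fsetI => /andP[zA zAt].
  rewrite in_fsetU !in_fsetD zA zAt !andbT -negb_and; apply/negP => /andP[zg ztg].
  by have := in_fset0 z; rewrite -noz !in_fsetI zA zAt zg ztg.
by case=> z; rewrite !in_fsetI !mem_translate => /andP[/andP[_ zg] ztg]; exists z.
Qed.

Lemma shift_defect_gap (t : G) : 2 * D t < n -> n * D t <= 8 * s.
Proof.
case/good_points_pair=> z zg ztg.
have := shift_defect_le_miss (z - t)%R z cardU; rewrite subKr.
by move: zg ztg; rewrite !inE => /andP[_ ?] /andP[_ ?]; nia.
Qed.

Definition approx_stabilizer : {fset G} :=
  [fset t in [fset (a - b)%R | a in A, b in A] | n * D t <= 8 * s].

Lemma mem_approx_stabilizer (t : G) : (t \in approx_stabilizer) = (n * D t <= 8 * s).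
Proof.
rewrite !inE andbC; case: leqP => //= Dt; apply/imfset2P.
have : 0 < #|` A `&` translate A t|.
  have Dn : D t < n.
    by rewrite -(ltn_pmul2l cardA_gt0); apply: leq_ltn_trans Dt _; lia.
  by have := cardfsID (translate A t) A; rewrite /shift_defect in Dn; lia.
rewrite cardfs_gt0 => /fset0Pn[z]; rewrite in_fsetI mem_translate => /andP[zA ztA].
by exists z => //; exists (z - t)%R; rewrite ?subKr.
Qed.

Lemma approx_stabilizer_subgroup : is_subgroup approx_stabilizer.
Proof.
split=> [|t r].
  by rewrite mem_approx_stabilizer /shift_defect translate0 fsetDv cardfs0 muln0.
rewrite !mem_approx_stabilizer => Dt Dr; apply: shift_defect_gap.
by have := shift_defect_sub A t r; nia.
Qed.

Lemma good_points_nonempty : exists a0, a0 \in good_points.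
Proof.
apply/fset0Pn/negP => /eqP good0.
by have := card_fsetD_good_points; rewrite good0 fsetD0; have := cardA_gt0; lia.
Qed.

Section Coset.
Variable a0 : G.
Hypothesis good_a0 : a0 \in good_points.
Local Notation H := approx_stabilizer.
Local Notation C := (translate approx_stabilizer a0).
Local Notation A1 := (A `&` C).

Lemma card_fsetD_coset : n * #|` A `\` C| <= 4 * s.
Proof.
have far_miss a : a \in A `\` C -> n <= 4 * miss A U a.
  rewrite !inE mem_translate mem_approx_stabilizer -ltnNge => /andP[far _].
  have far2 : n <= 2 * D (a - a0)%R.
    by rewrite leqNgt; apply: contraTN far => /shift_defect_gap; rewrite -leqNgt.
  have := shift_defect_le_miss a0 a cardU.
  by move: good_a0; rewrite inE => /andP[_ ga0]; nia.
have := leq_mul_count_sum A (fun a => 4 * miss A U a) n.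
rewrite -big_distrr => /leq_trans/(_ (leq_mul (leqnn 4) sum_miss_le)).
apply: leq_trans; rewrite leq_mul2l -card_fset_sep; apply/orP; right.
apply/fsubset_leq_card/fsubsetP => a aAC; rewrite !inE far_miss // andbT.
by move: aAC; rewrite inE => /andP[_ ->].
Qed.

Lemma count_translate_stable (t : G) : t \in H ->
  #|` A1| <= count (fun y => (y + t)%R \in A1) A1 + D t.
Proof.
move=> tH; rewrite -(count_predC (fun y => (y + t)%R \in A1)) leq_add2l.
rewrite -(shift_defect_opp A t) -card_fset_sep; apply/fsubset_leq_card/fsubsetP => y.
rewrite !inE /= !mem_translate opprK => /andP[/andP[yA yC]].
rewrite yA andbT; apply: contra => ytA; rewrite ytA addrAC.
exact: is_subgroup_add approx_stabilizer_subgroup yC tH.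
Qed.

Lemma card_coset_inter : n <= 2 * #|` A1|.
Proof.
have := cardfsID C A; have := card_fsetD_coset; have := small_miss; have := cardA_gt0.
(* lia treats differently elaborated copies of a cardinality as distinct atoms,
   so the cardinalities are generalized first, here and below. *)
move: #|` A| #|` A1| #|` A `\` C| => m a1 b1 m_gt0 small b1_small splitA.
have : 8 * b1 < m by rewrite -(ltn_pmul2l m_gt0); lia.
lia.
Qed.

Lemma card_coset_fsetD : n * #|` C `\` A| <= 16 * s.
Proof.
have splitC : #|` A1| + #|` C `\` A| = #|` H| by rewrite fsetIC cardfsID card_translate.
have : \sum_(t <- H) (n * #|` A1|) <=
       \sum_(t <- H) (n * count (fun y => (y + t)%R \in A1) A1 + 8 * s).
  rewrite big_seq_cond [X in _ <= X]big_seq_cond; apply: leq_sum => t /andP[tH _].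
  by have := count_translate_stable tH; move: tH; rewrite mem_approx_stabilizer; nia.
rewrite big_split /= -!big_distrr /= !big_const_seq !count_predT !iter_addn_0 -splitC.
have := sum_count_translate_le H A1; have := card_coset_inter.
have := small_miss; have := cardA_gt0.
move: #|` A| #|` A1| #|` C `\` A| (\sum_(t <- H) _).
move=> m a1 b2 c m_gt0 small a1_big c_le count_ge.
have s_le : 16 * s <= m * a1 by nia.
have : m * b2 * a1 <= 16 * s * a1 by nia.
by rewrite leq_pmul2r //; lia.
Qed.

End Coset.

Theorem approx_group_near_coset : exists (H : {fset G}) (x : G),
  is_subgroup H /\ n * n * #|` symdiff A (translate H x)| <= 40 * s * #|` H|.
Proof.
have [a0 good_a0] := good_points_nonempty.
exists approx_stabilizer, a0; split; first exact: approx_stabilizer_subgroup.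
set C := translate approx_stabilizer a0.
have sd_le : #|` symdiff A C| <= #|` A `\` C| + #|` C `\` A| by rewrite cardfsU leq_subr.
have A1_le : #|` A `&` C| <= #|` approx_stabilizer|.
  by rewrite -[#|` approx_stabilizer|](card_translate _ a0); apply/fsubset_leq_card/fsubsetIr.
have := card_fsetD_coset good_a0; have := card_coset_fsetD good_a0.
have := card_coset_inter good_a0.
move: sd_le A1_le.
move: #|` A| #|` symdiff A C| #|` A `\` C| #|` C `\` A| #|` A `&` C| #|` approx_stabilizer|.
move=> m d b1 b2 a1 h sd_le A1_le a1_big b2_small b1_small.
have md : m * d <= 20 * s by apply: leq_trans (leq_mul (leqnn m) sd_le) _; lia.
nia.
Qed.

End ApproximateGroup.

Local Open Scope R_scope.

Lemma two_le_ln_inv_mul (eps m : R) :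
  0 < eps -> eps < exp (-2) -> 1 <= m -> 2 <= ln (/ eps * m).
Proof.
move=> eps_gt0 eps_lt m_ge1; rewrite -(ln_exp 2); apply: Rlt_le; apply: ln_increasing.
  exact: exp_pos.
have : exp 2 < / eps.
  rewrite -(Rinv_inv (exp 2)) -exp_Ropp; apply: Rinv_lt_contravar => //.
  by apply: Rmult_lt_0_compat => //; apply: exp_pos.
have : / eps * 1 <= / eps * m by apply: Rmult_le_compat_l => //; apply/Rlt_le/Rinv_0_lt_compat.
lra.
Qed.

Lemma sum_miss_le_eps (G : zmodType) (eps : R) (A U : {fset G}) :
  A != fset0 -> 1 - eps <= INR (npairs_in A U) / INR (#|` A| * #|` A|) ->
  INR (\sum_(x <- A) miss A U x) <= eps * INR (#|` A| * #|` A|).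
Proof.
rewrite -cardfs_gt0 => /ltP/lt_INR; rewrite INR_0 => n_gt0 approx.
have nn_gt0 : 0 < INR (#|` A| * #|` A|) by rewrite mult_INR; nra.
have : (1 - eps) * INR (#|` A| * #|` A|) <= INR (npairs_in A U).
  move/(Rmult_le_compat_r _ _ _ (Rlt_le _ _ nn_gt0)): approx.
  by rewrite /Rdiv Rmult_assoc Rinv_l ?Rmult_1_r //; lra.
have := f_equal INR (npairs_in_add_sum_miss A U); rewrite plus_INR; nra.
Qed.

Theorem approx_group_near_coset_eps (G : zmodType) (eps : R) (A : {fset G}) :
  eps < / 32 -> distrib_approx_group eps A ->
  exists (H : {fset G}) (x : G), is_subgroup H /\
    INR #|` symdiff A (translate H x)| <= 40 * eps * INR #|` H|.
Proof.
move=> eps_lt [A0 [U [cardU approx]]].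
have nn_gt0 : 0 < INR (#|` A| * #|` A|).
  by apply: (lt_INR 0); apply/ltP; rewrite muln_gt0 cardfs_gt0 A0.
have S_le := sum_miss_le_eps A0 approx.
have small_miss : (32 * \sum_(x <- A) miss A U x < #|` A| * #|` A|)%N.
  apply/ltP/INR_lt; rewrite mult_INR (INR_IZR_INZ 32) /=.
  by move: S_le nn_gt0; move: (INR (_ * _)) (INR (\sum_(x <- A) _)) => N S; nra.
have [H [x [subH near]]] := approx_group_near_coset cardU (leqnn _) small_miss.
exists H, x; split => //.
move/leP/le_INR: near; rewrite !mult_INR (INR_IZR_INZ 40) /=.
move: S_le nn_gt0 (pos_INR #|` H|); rewrite mult_INR.
move: (INR #|` A|) (INR (\sum_(x <- A) _)) (INR #|` H|) (INR #|` symdiff _ _|).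
move=> n S h d S_le nn_gt0 h_ge0 near.
by apply: (Rmult_le_reg_l (n * n)) => //; apply: (Rle_trans _ _ _ near); nra.
Qed.

Theorem mainTheorem1 :
  exists theta : R, 0 < theta /\
  forall (G : zmodType) (eps : R) (A : {fset G}),
    0 < eps -> eps < exp (-2) ->
    distrib_approx_group eps A ->
    240 * eps * ln (/ eps * INR #|` A|) <= theta ->
    exists (H : {fset G}) (x : G),
      is_subgroup H /\
      INR #|` symdiff A (translate H x)| / INR #|` H|
         <= 240 * eps * ln (/ eps * INR #|` A|).
Proof.
exists 1; split; first lra.
move=> G eps A eps_gt0 eps_lt approx small.
have L_ge2 : 2 <= ln (/ eps * INR #|` A|).
  apply: two_le_ln_inv_mul => //; apply: (le_INR 1); apply/leP.
  by rewrite cardfs_gt0; case: approx.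
have eps_small : eps < / 32 by nra.
have [H [x [subH near]]] := approx_group_near_coset_eps eps_small approx.
exists H, x; split => //.
have h_gt0 : 0 < INR #|` H|.
  by apply: (lt_INR 0); apply/ltP; rewrite cardfs_gt0; apply/fset0Pn; exists 0%R; case: subH.
move: near L_ge2 h_gt0; move: (ln _) (INR #|` H|) (INR #|` symdiff _ _|) => L h d.
move=> near L_ge2 h_gt0; apply: (Rmult_le_reg_r _ _ _ h_gt0).
rewrite /Rdiv Rmult_assoc Rinv_l ?Rmult_1_r; last exact: Rgt_not_eq.
have eh_gt0 : 0 < eps * h by apply: Rmult_lt_0_compat.
nra.
Qed.
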